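(* Let $G$ be a complete $t$-partite graph with $t\ge2$ parts, at least one of which has size greater than $1$. If $G$ is $\mathcal{C}$-$\mathrm{MH}$, then $t=2$.
   Context: Subgraphs are induced. A homomorphism maps edges to edges; a monomorphism is an injective homomorphism. A graph $G$ is $\mathcal{C}$-$\mathrm{MH}$ if every monomorphism from a finite connected induced subgraph of $G$ into $G$ extends to a homomorphism $G\to G$. *)

From Stdlib Require Import List Relations.

Definition finite_set {V : Type} (S : V -> Prop) : Prop :=
  exists l : list V, forall x, S x -> In x l.

Definition induced_connected {V : Type} (adj : V -> V -> Prop) (S : V -> Prop) : Prop :=
  forall x y, S x -> S y ->
    clos_refl_trans V (fun a b => S a /\ S b /\ adj a b) x y.

Definition mono_on {V : Type} (adj : V -> V -> Prop) (S : V -> Prop) (f : V -> V) : Prop :=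
  (forall x y, S x -> S y -> f x = f y -> x = y) /\
  (forall x y, S x -> S y -> adj x y -> adj (f x) (f y)).

Definition graph_hom {V : Type} (adj : V -> V -> Prop) (h : V -> V) : Prop :=
  forall x y, adj x y -> adj (h x) (h y).

Definition C_MH {V : Type} (adj : V -> V -> Prop) : Prop :=
  forall (S : V -> Prop) (f : V -> V),
    finite_set S -> induced_connected adj S -> mono_on adj S f ->
    exists h : V -> V, graph_hom adj h /\ (forall x, S x -> h x = f x).

(* p : V -> nat witnesses that G is complete t-partite with parts
   p^-1(0), ..., p^-1(t-1), all nonempty *)
Definition complete_multipartite_by {V : Type} (adj : V -> V -> Prop)
  (t : nat) (p : V -> nat) : Prop :=
  (forall x, p x < t) /\
  (forall i, i < t -> exists x, p x = i) /\
  (forall x y, adj x y <-> p x <> p y).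

From Stdlib Require Import List Relations.
From Stdlib Require Import ClassicalEpsilon Lia PeanoNat.

(* Suppose t >= 3, let a, a' be distinct vertices of one part i, and pick b, c in
   two further parts j, k.  The path a - b - a' is a connected induced subgraph,
   and fixing a, b while sending a' to c is a monomorphism of it.  But every
   endomorphism h of a complete t-partite graph maps each part into a single
   part: a transversal through a is a t-clique, so its image meets every part,
   in particular the part of h a'; that vertex cannot lie in a part other than
   that of a', being adjacent to a' and mapped into the part of h a'.  Hence h a
   and h a' lie in the same part, so h cannot extend the monomorphism. *)

Lemma bounded_injective_surjective (t : nat) (q : nat -> nat) :
  (forall n, n < t -> q n < t) ->
  (forall n m, n < t -> m < t -> q n = q m -> n = m) ->
  forall k, k < t -> exists m, m < t /\ q m = k.
Proof.
  intros q_lt q_inj k k_lt.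
  assert (seq_in_image : incl (seq 0 t) (map q (seq 0 t))).
  { apply NoDup_length_incl.
    - apply NoDup_map_NoDup_ForallPairs; [|apply seq_NoDup].
      intros n m Hn Hm. apply in_seq in Hn, Hm. apply q_inj; lia.
    - rewrite length_map; lia.
    - intros z Hz. apply in_map_iff in Hz as [n [<- Hn]]. apply in_seq in Hn.
      apply in_seq. specialize (q_lt n). lia. }
  destruct (in_map_iff q (seq 0 t) k) as [[m [Hqm Hm]] _].
  { apply seq_in_image, in_seq. lia. }
  apply in_seq in Hm. exists m. split; [lia | exact Hqm].
Qed.

Lemma two_other_indices (t i : nat) : 3 <= t -> i < t ->
  exists j k, j < t /\ k < t /\ j <> i /\ k <> i /\ j <> k.
Proof.
  intros. destruct i as [| [| i]].
  - exists 1, 2. lia.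
  - exists 0, 2. lia.
  - exists 0, 1. lia.
Qed.

Lemma induced_connected_star {V : Type} (adj : V -> V -> Prop) (S : V -> Prop) (b : V) :
  S b -> (forall x, S x -> x = b \/ (adj x b /\ adj b x)) -> induced_connected adj S.
Proof.
  intros Sb star x y Sx Sy.
  apply rt_trans with b.
  - destruct (star x Sx) as [-> | [xb _]]; [apply rt_refl | now apply rt_step].
  - destruct (star y Sy) as [-> | [_ by_]]; [apply rt_refl | now apply rt_step].
Qed.

Definition redirect {V : Type} (u v : V) (x : V) : V :=
  if excluded_middle_informative (x = u) then v else x.

Lemma redirect_at {V : Type} (u v : V) : redirect u v u = v.
Proof. unfold redirect. now destruct excluded_middle_informative. Qed.

Lemma redirect_other {V : Type} (u v x : V) : x <> u -> redirect u v x = x.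
Proof. unfold redirect. now destruct excluded_middle_informative. Qed.

Section CompleteMultipartite.

Variables (V : Type) (adj : V -> V -> Prop) (t : nat) (p : V -> nat).
Hypothesis multipartite : complete_multipartite_by adj t p.

Let part_lt : forall x, p x < t := proj1 multipartite.
Let part_inhabited : forall n, n < t -> exists x, p x = n := proj1 (proj2 multipartite).
Let adj_iff : forall x y, adj x y <-> p x <> p y := proj2 (proj2 multipartite).

Lemma transversal_through (a : V) :
  exists w : nat -> V, (forall n, n < t -> p (w n) = n) /\ w (p a) = a.
Proof.
  assert (rep : forall n, exists x, n < t -> p x = n).
  { intro n. destruct (Nat.lt_ge_cases n t) as [lt | ge].
    - destruct (part_inhabited n lt) as [x Hx]. now exists x.
    - exists a. lia. }
  destruct (choice _ rep) as [v Hv].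
  exists (fun n => if Nat.eq_dec n (p a) then a else v n). split.
  - intros n lt. destruct Nat.eq_dec; auto.
  - now destruct Nat.eq_dec.
Qed.

Lemma hom_image_transversal_meets_parts (h : V -> V) (w : nat -> V) :
  graph_hom adj h -> (forall n, n < t -> p (w n) = n) ->
  forall k, k < t -> exists m, m < t /\ p (h (w m)) = k.
Proof.
  intros hom Hw. apply bounded_injective_surjective; [intros; apply part_lt |].
  intros n m lt_n lt_m E. destruct (Nat.eq_dec n m) as [| ne]; [assumption | exfalso].
  assert (adj_w : adj (w n) (w m)) by (apply adj_iff; now rewrite !Hw).
  exact (proj1 (adj_iff _ _) (hom _ _ adj_w) E).
Qed.

Lemma hom_preserves_parts (h : V -> V) (a a' : V) :
  graph_hom adj h -> p a = p a' -> p (h a) = p (h a').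
Proof.
  intros hom same_part.
  destruct (transversal_through a) as [w [Hw w_a]].
  destruct (hom_image_transversal_meets_parts h w hom Hw (p (h a')) (part_lt _))
    as [m [lt_m Hm]].
  destruct (Nat.eq_dec m (p a)) as [-> | ne].
  - now rewrite w_a in Hm.
  - assert (adj_w : adj (w m) a') by (apply adj_iff; rewrite Hw; lia).
    exfalso. exact (proj1 (adj_iff _ _) (hom _ _ adj_w) Hm).
Qed.

Lemma redirect_path_mono_on (a b a' c : V) :
  a <> a' -> p a = p a' -> p a <> p b -> p a <> p c -> p b <> p c ->
  mono_on adj (fun x => x = a \/ x = b \/ x = a') (redirect a' c).
Proof.
  intros aa' same ab ac bc.
  assert (ba' : b <> a') by (intros ->; congruence).
  split.
  - intros x y [-> | [-> | ->]] [-> | [-> | ->]]; rewrite ?redirect_at,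
      ?(redirect_other a' c a aa'), ?(redirect_other a' c b ba'); congruence.
  - intros x y [-> | [-> | ->]] [-> | [-> | ->]]; rewrite ?redirect_at,
      ?(redirect_other a' c a aa'), ?(redirect_other a' c b ba'); rewrite !adj_iff;
      congruence.
Qed.

End CompleteMultipartite.

Theorem lemma7p2 (V : Type) (adj : V -> V -> Prop) (t : nat) (p : V -> nat) :
  2 <= t ->
  complete_multipartite_by adj t p ->
  (exists x y : V, x <> y /\ p x = p y) ->
  C_MH adj ->
  t = 2.
Proof.
  intros Ht multipartite [a [a' [aa' same]]] mh.
  pose proof multipartite as [part_lt [part_inhabited adj_iff]].
  destruct (Nat.eq_dec t 2) as [| ne]; [assumption | exfalso].
  destruct (two_other_indices t (p a) ltac:(lia) (part_lt a))
    as [j [k [lt_j [lt_k [ja [ka jk]]]]]].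
  destruct (part_inhabited j lt_j) as [b Hb].
  destruct (part_inhabited k lt_k) as [c Hc].
  set (S := fun x => x = a \/ x = b \/ x = a').
  assert (ab : p a <> p b) by congruence.
  assert (ac : p a <> p c) by congruence.
  assert (bc : p b <> p c) by congruence.
  destruct (mh S (redirect a' c)) as [h [hom extends]].
  - exists (a :: b :: a' :: nil). intros x [-> | [-> | ->]]; simpl; auto.
  - apply induced_connected_star with b; [unfold S; auto |].
    intros x [-> | [-> | ->]]; [right | now left | right]; rewrite !adj_iff; split; congruence.
  - exact (redirect_path_mono_on V adj t p multipartite a b a' c aa' same ab ac bc).
  - assert (ha : h a = a).
    { rewrite extends by (unfold S; auto). apply redirect_other. assumption. }
    assert (ha' : h a' = c) by (rewrite extends by (unfold S; auto); apply redirect_at).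
    apply ac. rewrite <- ha at 1. rewrite <- ha'.
    exact (hom_preserves_parts V adj t p multipartite h a a' hom same).
Qed.
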